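(* Let $S\subset\mathbb{R}^n$ be a real algebraic variety given as the common zero set of $m$ real polynomials $F_1,\dots,F_m$ in unknowns $x_1,\dots,x_n$, such that every point $(x_1,\dots,x_n)\in S$ satisfies $0<x_i$ for $i=1,\dots,n$ and $\sum_{i=1}^n x_i<1$. Suppose the highest power of $x_i$ occurring in $F_j$ is $x_i^{d_{ij}}$, and set $$D'=\sum_{i=1}^n\max_{1\le j\le m}d_{ij}.$$ Then there is a game with $D'+m$ players, each of whom has $2$ pure strategies, whose set of totally mixed Nash equilibria is stably isomorphic to $S$.
   Context: A real algebraic variety is the set of common real zeros in $\mathbb{R}^n$ of finitely many real polynomials. Two semialgebraic sets are semialgebraically isomorphic if there is a homeomorphism between them whose graph is semialgebraic; they are stably isomorphic if they are equivalent under the equivalence relation generated by semialgebraic isomorphisms and the canonical projections $W\times\mathbb{R}^k\to W$. A finite normal form game consists of players $I=\{1,\dots,N\}$, finite pure strategy sets $S_i=\{s_{i0},\dots,s_{id_i}\}$, and payoffs $u_i:\prod_i S_i\to\mathbb{R}$. A mixed strategy of player $i$ is a probability vector $\sigma_i$ on $S_i$; expected payoffs are multilinear: $u_i(\sigma)=\sum_{s}u_i(s)\prod_k\sigma_k(s_k)$, and $u_i(s_{ij},\sigma_{-i})$ denotes player $i$'s expected payoff when $i$ plays $s_{ij}$ and the others play according to $\sigma$. A profile $\sigma$ is a totally mixed Nash equilibrium if $0<\sigma_i(s_{ij})<1$ for all $i,j$ and $u_i(s_{ij},\sigma_{-i})=u_i(s_{i0},\sigma_{-i})$ for all $i$ and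 $j=1,\dots,d_i$. When every player has two pure strategies, the set of totally mixed Nash equilibria is regarded as a subset of $\mathbb{R}^N$ via the coordinates $p_i=\sigma_i(s_{i1})$. *)

From HB Require Import structures.
From mathcomp Require Import all_boot all_order all_algebra.
From mathcomp Require Import all_classical all_reals all_analysis.
From mathcomp Require mpoly.

Set Implicit Arguments.
Unset Strict Implicit.
Unset Printing Implicit Defensive.

Import Order.TTheory GRing.Theory Num.Theory.
Import numFieldNormedType.Exports.
Local Open Scope classical_set_scope.
Local Open Scope ring_scope.

Definition coords (R : realType) (n : nat) (x : 'rV[R]_n) : 'I_n -> R :=
  fun i => x ord0 i.

Definition peval (R : realType) (n : nat) (p : mpoly.mpoly n R)
  (x : 'rV[R]_n) : R := mpoly.meval (coords x) p.

(* Highest power of x_i occurring in p (0 for the zero polynomial). *)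
Definition deg_in (R : realType) (n : nat) (p : mpoly.mpoly n R) (i : 'I_n)
  : nat := (\max_(mm <- mpoly.msupp p) mpoly.fun_of_multinom mm i)%N.

Inductive semialgebraic (R : realType) (n : nat) : set 'rV[R]_n -> Prop :=
| sa_zero (p : mpoly.mpoly n R) : semialgebraic [set x | peval p x = 0]
| sa_pos (p : mpoly.mpoly n R) : semialgebraic [set x | 0 < peval p x]
| sa_union (A B : set 'rV[R]_n) :
    semialgebraic A -> semialgebraic B -> semialgebraic (A `|` B)
| sa_compl (A : set 'rV[R]_n) : semialgebraic A -> semialgebraic (~` A).

Definition graph_on (R : realType) (a b : nat) (A : set 'rV[R]_a)
  (f : 'rV[R]_a -> 'rV[R]_b) : set 'rV[R]_(a + b) :=
  [set z | A (lsubmx z) /\ f (lsubmx z) = rsubmx z].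

Definition sa_isomorphic (R : realType) (a b : nat)
  (A : set 'rV[R]_a) (B : set 'rV[R]_b) : Prop :=
  exists (f : 'rV[R]_a -> 'rV[R]_b) (g : 'rV[R]_b -> 'rV[R]_a),
    (forall x, A x -> B (f x)) /\
    (forall y, B y -> A (g y)) /\
    (forall x, A x -> g (f x) = x) /\
    (forall y, B y -> f (g y) = y) /\
    {within A, continuous f} /\
    {within B, continuous g} /\
    semialgebraic (graph_on A f).

Definition cylinder (R : realType) (a k : nat) (W : set 'rV[R]_a)
  : set 'rV[R]_(a + k) := [set z | W (lsubmx z)].

Inductive stably_isomorphic (R : realType) :
  forall a : nat, set 'rV[R]_a -> forall b : nat, set 'rV[R]_b -> Prop :=
| si_iso a b (A : set 'rV[R]_a) (B : set 'rV[R]_b) :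
    sa_isomorphic A B -> stably_isomorphic A B
| si_proj a k (W : set 'rV[R]_a) :
    semialgebraic W -> stably_isomorphic (@cylinder R a k W) W
| si_sym a b (A : set 'rV[R]_a) (B : set 'rV[R]_b) :
    stably_isomorphic A B -> stably_isomorphic B A
| si_trans a b c (A : set 'rV[R]_a) (B : set 'rV[R]_b) (C : set 'rV[R]_c) :
    stably_isomorphic A B -> stably_isomorphic B C -> stably_isomorphic A C.

(* Games with N players, each with two pure strategies s_i0 = false,
   s_i1 = true. A game is its payoff function u i s. *)
Definition game2 (R : realType) (N : nat) :=
  'I_N -> {ffun 'I_N -> bool} -> R.

(* u_i(s_ij, sigma_{-i}) where sigma_k(s_k1) = p_k, sigma_k(s_k0) = 1 - p_k. *)
Definition dev_payoff (R : realType) (N : nat) (u : game2 R N) (i : 'I_N)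
  (b : bool) (p : 'rV[R]_N) : R :=
  \sum_(s : {ffun 'I_N -> bool} | s i == b)
     u i s * \prod_(k < N | k != i)
               (if s k then coords p k else 1 - coords p k).

(* Totally mixed Nash equilibria, as a subset of R^N via p_i = sigma_i(s_i1). *)
Definition totally_mixed_NE (R : realType) (N : nat) (u : game2 R N)
  : set 'rV[R]_N :=
  [set p | forall i : 'I_N,
     (0 < coords p i < 1) /\ dev_payoff u i true p = dev_payoff u i false p].

Definition zero_set (R : realType) (n m : nat) (F : 'I_m -> mpoly.mpoly n R)
  : set 'rV[R]_n := [set x | forall j, peval (F j) x = 0].

From HB Require Import structures.
From mathcomp Require Import all_boot all_order all_algebra.
From mathcomp Require Import mpoly.
From mathcomp Require Import all_classical all_reals all_analysis.
From mathcomp Require Import ring lra zify.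
Import Order.TTheory GRing.Theory Num.Theory.
Import numFieldNormedType.Exports.
Local Open Scope classical_set_scope.
Local Open Scope ring_scope.
Set Implicit Arguments.
Unset Strict Implicit.
Unset Printing Implicit Defensive.

(* Give the variable x_i as many players ("copies") as its degree d_i, and
   each equation F_j one player.  Every player has two strategies and is paid
   0 for the first one, so he is indifferent iff his payoff for the second one,
   a polynomial that is multilinear in the other players' probabilities,
   vanishes.  Equation player j is paid F_j with each power x_i^e replaced by
   a product of e distinct copies of x_i; each copy player is paid x - x' for
   two neighbouring copies x, x' of one variable, neither of them himself, so
   that all copies of x_i must agree.  Then the totally mixed equilibria are
   S x (0,1)^m, the equation players being unconstrained, and (0,1) is
   semialgebraically homeomorphic to R. *)

Section PolynomialFunctions.
Variables (R : realType) (a : nat).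

Definition poly_fun (f : 'rV[R]_a -> R) := exists p : {mpoly R[a]}, f =1 peval p.

Lemma eq_poly_fun (f g : 'rV[R]_a -> R) : f =1 g -> poly_fun f -> poly_fun g.
Proof. by move=> fg [p fp]; exists p => x; rewrite -fg. Qed.

Lemma poly_funC (c : R) : poly_fun (fun=> c).
Proof. by exists c%:MP => x; rewrite /peval mevalC. Qed.

Lemma poly_fun_coord (i : 'I_a) : poly_fun (fun x => x ord0 i).
Proof. by exists 'X_i => x; rewrite /peval mevalXU. Qed.

Lemma poly_funD (f g : 'rV[R]_a -> R) :
  poly_fun f -> poly_fun g -> poly_fun (fun x => f x + g x).
Proof. by move=> [p fp] [q gq]; exists (p + q) => x; rewrite /peval mevalD fp gq. Qed.

Lemma poly_funN (f : 'rV[R]_a -> R) : poly_fun f -> poly_fun (fun x => - f x).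
Proof. by move=> [p fp]; exists (- p) => x; rewrite /peval mevalN fp. Qed.

Lemma poly_funB (f g : 'rV[R]_a -> R) :
  poly_fun f -> poly_fun g -> poly_fun (fun x => f x - g x).
Proof. by move=> pf pg; apply: poly_funD => //; apply: poly_funN. Qed.

Lemma poly_funM (f g : 'rV[R]_a -> R) :
  poly_fun f -> poly_fun g -> poly_fun (fun x => f x * g x).
Proof. by move=> [p fp] [q gq]; exists (p * q) => x; rewrite /peval mevalM fp gq. Qed.

Lemma poly_funX (f : 'rV[R]_a -> R) k : poly_fun f -> poly_fun (fun x => f x ^+ k).
Proof.
move=> pf; elim: k => [|k ih]; first by apply: eq_poly_fun (poly_funC 1) => x.
by apply: eq_poly_fun (poly_funM pf ih) => x; rewrite exprS.
Qed.

Lemma poly_fun_sum (I : Type) (r : seq I) (P : pred I) (f : I -> 'rV[R]_a -> R) :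
  (forall i, poly_fun (f i)) -> poly_fun (fun x => \sum_(i <- r | P i) f i x).
Proof.
move=> pf; elim: r => [|i r ih]; first by apply: eq_poly_fun (poly_funC 0) => x; rewrite big_nil.
have [q sq] := poly_funD (pf i) ih; have [p sp] := ih.
by exists (if P i then q else p) => x; rewrite big_cons; case: (P i).
Qed.

Lemma poly_fun_prod (I : Type) (r : seq I) (P : pred I) (f : I -> 'rV[R]_a -> R) :
  (forall i, poly_fun (f i)) -> poly_fun (fun x => \prod_(i <- r | P i) f i x).
Proof.
move=> pf; elim: r => [|i r ih]; first by apply: eq_poly_fun (poly_funC 1) => x; rewrite big_nil.
have [q sq] := poly_funM (pf i) ih; have [p sp] := ih.
by exists (if P i then q else p) => x; rewrite big_cons; case: (P i).
Qed.

Lemma poly_fun_comp b (p : {mpoly R[b]}) (q : 'rV[R]_a -> 'rV[R]_b) :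
  (forall i, poly_fun (fun x => q x ord0 i)) -> poly_fun (fun x => peval p (q x)).
Proof.
move=> pq; apply: (@eq_poly_fun (fun x =>
  \sum_(mm <- msupp p) p@_mm * \prod_i coords (q x) i ^+ mm i)) => [x|].
  by rewrite /peval mevalE.
apply: poly_fun_sum => mm; apply: poly_funM; first exact: poly_funC.
by apply: poly_fun_prod => i; apply/poly_funX/pq.
Qed.

End PolynomialFunctions.

Section SemialgebraicSets.
Variable R : realType.

Lemma eq_sa a (A B : set 'rV[R]_a) :
  (forall x, A x <-> B x) -> semialgebraic A -> semialgebraic B.
Proof. by move=> AB; have -> // : A = B by apply/funext => x; apply/propext. Qed.

Lemma sa_setI a (A B : set 'rV[R]_a) :
  semialgebraic A -> semialgebraic B -> semialgebraic (A `&` B).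
Proof.
move=> sA sB; rewrite -[A `&` B]setCK setCI.
exact: sa_compl (sa_union (sa_compl sA) (sa_compl sB)).
Qed.

Lemma sa_eq0 a (f : 'rV[R]_a -> R) : poly_fun f -> semialgebraic [set x | f x = 0].
Proof. by move=> [p fp]; apply: eq_sa (sa_zero p) => x /=; rewrite fp. Qed.

Lemma sa_gt0 a (f : 'rV[R]_a -> R) : poly_fun f -> semialgebraic [set x | 0 < f x].
Proof. by move=> [p fp]; apply: eq_sa (sa_pos p) => x /=; rewrite fp. Qed.

Lemma sa_setT a : semialgebraic [set: 'rV[R]_a].
Proof. exact: eq_sa (sa_eq0 (poly_funC a 0)). Qed.

Lemma sa_set0 a : semialgebraic (@set0 'rV[R]_a).
Proof. by apply: eq_sa (sa_gt0 (poly_funC a 0)) => x /=; rewrite ltxx. Qed.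

Lemma sa_forall a (I : finType) (P : I -> set 'rV[R]_a) :
  (forall i, semialgebraic (P i)) -> semialgebraic [set x | forall i, P i x].
Proof.
move=> sP; suff: semialgebraic [set x | forall i, i \in enum I -> P i x].
  by apply: eq_sa => x; split=> Px i; [apply: Px; rewrite mem_enum|].
elim: (enum I) => [|i s ih]; first by apply: eq_sa (sa_setT a).
apply: eq_sa (sa_setI (sP i) ih) => x; rewrite /=.
split=> [[Pix Psx] j|Px]; first by rewrite in_cons => /orP[/eqP->|/Psx].
by split=> [|j js]; apply: Px; rewrite in_cons ?eqxx ?js ?orbT.
Qed.

Lemma sa_preimage a b (q : 'rV[R]_a -> 'rV[R]_b) (A : set 'rV[R]_b) :
  (forall i, poly_fun (fun x => q x ord0 i)) -> semialgebraic A ->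
  semialgebraic (q @^-1` A).
Proof.
move=> pq; elim=> [p|p|B C _ sB _ sC|B _ sB].
- exact: sa_eq0 (poly_fun_comp p pq).
- exact: sa_gt0 (poly_fun_comp p pq).
- exact: sa_union sB sC.
- exact: sa_compl sB.
Qed.

End SemialgebraicSets.

Lemma continuous_coordwise (R : realType) a b (f : 'rV[R]_a -> 'rV[R]_b) x :
  (forall j, {for x, continuous (fun y => f y ord0 j)}) -> {for x, continuous f}.
Proof.
move=> cf A /nbhs_ballP [e e0 eA].
have : \forall y \near x, forall j, ball (f x ord0 j) e (f y ord0 j).
  apply: (@filter_forall _ _ (fun j y => ball (f x ord0 j) e (f y ord0 j)) (nbhs x) _) => j.
  exact: cf j _ (nbhsx_ballx _ _ e0).
by apply: filterS => y fy; apply: eA; split => // i j; rewrite (ord1 i); apply: fy.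
Qed.

Section UnitIntervalLine.
Variable R : realType.

Definition unit_to_line (t : R) : R := (2 * t - 1) / (t * (1 - t)).

(* The positive root t of z t (1 - t) = 2 t - 1, written so that the
   denominator stays above 2. *)
Definition line_to_unit (z : R) : R := 2 / (2 - z + Num.sqrt (z ^+ 2 + 4)).

Lemma line_to_unit_den_gt2 (z : R) : 2 < 2 - z + Num.sqrt (z ^+ 2 + 4).
Proof.
have sq4 : 0 <= z ^+ 2 + 4 by rewrite addr_ge0 // sqr_ge0.
have := sqr_sqrtr sq4; have := sqrtr_ge0 (z ^+ 2 + 4); set s := Num.sqrt _.
nra.
Qed.

Lemma line_to_unit_in01 (z : R) : 0 < line_to_unit z < 1.
Proof.
have den := line_to_unit_den_gt2 z.
by rewrite divr_gt0 ?ltr_pdivrMr ?mul1r //=; lra.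
Qed.

Lemma unit_to_lineE (t z : R) :
  0 < t < 1 -> unit_to_line t = z <-> z * (t * (1 - t)) = 2 * t - 1.
Proof.
move=> /andP [t0 t1]; have tt1 : t * (1 - t) != 0 by apply/eqP; nra.
by rewrite /unit_to_line; split => [<-|<-]; rewrite ?mulfVK ?mulfK.
Qed.

Lemma line_to_unitK : cancel line_to_unit unit_to_line.
Proof.
move=> z; apply/unit_to_lineE; first exact: line_to_unit_in01.
have den := line_to_unit_den_gt2 z.
have sq4 : 0 <= z ^+ 2 + 4 by rewrite addr_ge0 // sqr_ge0.
have := sqr_sqrtr sq4; rewrite /line_to_unit; set s := Num.sqrt _ in den * => s2.
set t := 2 / _; have td : t * (2 - z + s) = 2 by rewrite mulfVK //; apply/eqP; lra.
have ts : t * s = 2 - 2 * t + z * t by nra.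
have : (t * s) ^+ 2 = (2 - 2 * t + z * t) ^+ 2 by rewrite ts.
by rewrite exprMn s2; nra.
Qed.

Lemma unit_to_lineK (t : R) : 0 < t < 1 -> line_to_unit (unit_to_line t) = t.
Proof.
move=> /andP [t0 t1]; have tt1 : 0 < t * (1 - t) by nra.
have tt1' : t * (1 - t) != 0 by rewrite gt_eqF.
rewrite /line_to_unit.
have -> : unit_to_line t ^+ 2 + 4 = ((1 - 2 * (t * (1 - t))) / (t * (1 - t))) ^+ 2.
  by rewrite /unit_to_line; field; apply/andP; split; apply/eqP; nra.
rewrite sqrtr_sqr ger0_norm; last by rewrite divr_ge0 ?ltW //; nra.
have -> : 2 - unit_to_line t + (1 - 2 * (t * (1 - t))) / (t * (1 - t)) = 2 / t.
  by rewrite /unit_to_line; field; apply/andP; split; apply/eqP; nra.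
by field; apply/eqP; lra.
Qed.

Lemma continuous_line_to_unit : continuous line_to_unit.
Proof.
move=> z; have den := line_to_unit_den_gt2 z.
apply: cvgM; first exact: cvg_cst.
apply: cvgV; first by apply/eqP; lra.
apply: cvgD; first by apply: cvgB; [exact: cvg_cst | exact: cvg_id].
apply: (continuous_comp (f := fun x : R => x ^+ 2 + 4)); last exact: sqrt_continuous.
by apply: cvgD; [exact: exprn_continuous | exact: cvg_cst].
Qed.

Lemma unit_to_line_continuous (t : R) :
  0 < t < 1 -> {for t, continuous unit_to_line}.
Proof.
move=> /andP [t0 t1]; apply: cvgM.
  by apply: cvgB; [apply: cvgM; [exact: cvg_cst | exact: cvg_id] | exact: cvg_cst].
apply: cvgV; first by apply/eqP; nra.
by apply: cvgM; [exact: cvg_id | apply: cvgB; [exact: cvg_cst | exact: cvg_id]].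
Qed.

End UnitIntervalLine.

Section TwoStrategyGames.
Variables (R : realType) (N : nat).

Lemma poly_fun_dev_payoff (u : game2 R N) i b :
  poly_fun (fun p => dev_payoff u i b p).
Proof.
apply: poly_fun_sum => s; apply: poly_funM; first exact: poly_funC.
apply: poly_fun_prod => k; case: (s k); first exact: poly_fun_coord.
by apply: poly_funB; [exact: poly_funC | exact: poly_fun_coord].
Qed.

Lemma totally_mixed_NE_sa (u : game2 R N) : semialgebraic (totally_mixed_NE u).
Proof.
have pdev i : poly_fun (fun p => dev_payoff u i true p - dev_payoff u i false p).
  by apply: poly_funB; apply: poly_fun_dev_payoff.
have in01 i : poly_fun (fun p : 'rV[R]_N => 1 - p ord0 i).
  by apply: poly_funB; [exact: poly_funC | exact: poly_fun_coord].
apply: eq_sa (sa_forall (fun i => sa_setI (sa_setI (sa_gt0 (poly_fun_coord R i))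
  (sa_gt0 (in01 i))) (sa_eq0 (pdev i)))) => p /=.
rewrite /totally_mixed_NE /coords /=; split=> NE i; have := NE i; rewrite subr_gt0.
  by move=> [[-> ->] /eqP]; rewrite subr_eq0 => /eqP.
by move=> [/andP[-> ->] ->]; rewrite subrr.
Qed.

Lemma sum_profiles_prod (i : 'I_N) (b : bool) (phi : 'I_N -> bool -> R) :
  \sum_(s : {ffun 'I_N -> bool} | s i == b) \prod_(k < N | k != i) phi k (s k)
  = \prod_(k < N | k != i) (phi k true + phi k false).
Proof.
pose psi k c : R := if k == i then (c == b)%:R else phi k c.
have psi_i c : psi i c = (c == b)%:R by rewrite /psi eqxx.
have psi_k k c : k != i -> psi k c = phi k c by rewrite /psi => /negbTE ->.
have distr : \prod_k \sum_c psi k c = \sum_(s : {ffun 'I_N -> bool}) \prod_k psi k (s k).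
  exact: bigA_distr_bigA.
have psi_i1 : \sum_c psi i c = 1.
  by rewrite big_bool !psi_i; case: (b); rewrite /= ?addr0 ?add0r.
have psi_off : \prod_(k < N | k != i) \sum_c psi k c =
               \prod_(k < N | k != i) (phi k true + phi k false).
  by apply: eq_bigr => k ki; rewrite big_bool !psi_k.
rewrite (bigD1 i) //= psi_i1 mul1r psi_off in distr.
rewrite distr big_mkcond; apply: eq_bigr => s _ /=.
rewrite [RHS](bigD1 i) //= psi_i; case: eqP => _; rewrite ?mul0r ?mul1r //.
by apply: eq_bigr => k ki; rewrite psi_k.
Qed.

Lemma prod_mem_notin (T : {set 'I_N}) (i : 'I_N) (g : 'I_N -> R) : i \notin T ->
  \prod_(k < N | k \in T) g k = \prod_(k < N | k != i) (if k \in T then g k else 1).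
Proof.
move=> iT; rewrite big_mkcond [RHS]big_mkcond (bigD1 i) //= [RHS](bigD1 i) //=.
by rewrite (negbTE iT) eqxx !mul1r; apply: eq_bigr => k /negbTE ->.
Qed.

Definition monomial (T : {set 'I_N}) (p : 'rV[R]_N) : R :=
  \prod_(k < N | k \in T) coords p k.

Section PolynomialGames.
Variable L : 'I_N -> seq (R * {set 'I_N}).

Definition poly_game : game2 R N :=
  fun i s => if s i then \sum_(l <- L i) l.1 * \prod_(k < N | k \in l.2) (s k)%:R else 0.

Definition payoff_poly i p : R := \sum_(l <- L i) l.1 * monomial l.2 p.

Lemma dev_poly_game_true i p : (forall l, l \in L i -> i \notin l.2) ->
  dev_payoff poly_game i true p = payoff_poly i p.
Proof.
move=> Li; rewrite /dev_payoff.
under eq_bigr => s /eqP si do rewrite /poly_game si big_distrl /=.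
rewrite exchange_big /= big_seq [RHS]big_seq; apply: eq_bigr => l /Li lT.
under eq_bigr => s _ do rewrite -mulrA (prod_mem_notin _ lT) -big_split /=.
rewrite -big_distrr /= (sum_profiles_prod i true (fun k c =>
  (if k \in l.2 then c%:R else 1) * (if c then coords p k else 1 - coords p k))).
rewrite /monomial (prod_mem_notin _ lT).
by congr (_ * _); apply: eq_bigr => k _; case: (k \in l.2) => /=; ring.
Qed.

Lemma dev_poly_game_false i p : dev_payoff poly_game i false p = 0.
Proof. by rewrite /dev_payoff big1 // => s /eqP si; rewrite /poly_game si mul0r. Qed.

Lemma poly_game_indifferent i p : (forall l, l \in L i -> i \notin l.2) ->
  dev_payoff poly_game i true p = dev_payoff poly_game i false p <->
  payoff_poly i p = 0.
Proof. by move=> Li; rewrite dev_poly_game_false dev_poly_game_true. Qed.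

End PolynomialGames.

End TwoStrategyGames.

Lemma zero_set_sa (R : realType) n m (F : 'I_m -> {mpoly R[n]}) :
  semialgebraic (zero_set F).
Proof. exact: sa_forall (fun j => sa_zero (F j)). Qed.

(* Each player is either a copy of a variable x_i or one of k free players.
   If indifference of all players means exactly that every copy agrees with
   the representative rep i and that the representatives' point lies on S,
   then the totally mixed equilibria form S x (0,1)^k, i.e. S x R^k. *)
Section Reduction.
Variables (R : realType) (n m N k : nat) (F : 'I_m -> {mpoly R[n]}) (u : game2 R N).
Variables (role : 'I_N -> 'I_n + 'I_k) (rep : 'I_n -> 'I_N) (free : 'I_k -> 'I_N).
Hypothesis role_rep : forall i, role (rep i) = inl i.
Hypothesis role_free : forall l, role (free l) = inr l.
Hypothesis role_freeP : forall t l, role t = inr l -> t = free l.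
Hypothesis zero_set_in01 : forall x, zero_set F x -> forall i, 0 < coords x i < 1.

Definition rep_point (p : 'rV[R]_N) : 'rV[R]_n := \row_i coords p (rep i).

Hypothesis indifferentE : forall p : 'rV[R]_N,
  (forall t, dev_payoff u t true p = dev_payoff u t false p) <->
  (forall t i, role t = inl i -> coords p t = coords p (rep i)) /\ zero_set F (rep_point p).

Local Notation NE := (totally_mixed_NE u).
Local Notation cyl := (@cylinder R n k (zero_set F)).

Definition ne_to_cyl (p : 'rV[R]_N) : 'rV[R]_(n + k) :=
  row_mx (rep_point p) (\row_l unit_to_line (coords p (free l))).

Definition cyl_to_ne (z : 'rV[R]_(n + k)) : 'rV[R]_N :=
  \row_t match role t with
         | inl i => lsubmx z ord0 i
         | inr l => line_to_unit (rsubmx z ord0 l)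
         end.

Lemma ne_to_cyl_in p : NE p -> cyl (ne_to_cyl p).
Proof.
move=> NEp; rewrite /cylinder /ne_to_cyl /= row_mxKl.
by have [] := (indifferentE p).1 (fun t => (NEp t).2).
Qed.

Lemma rep_point_cyl_to_ne z : rep_point (cyl_to_ne z) = lsubmx z.
Proof. by apply/rowP => i; rewrite !mxE /coords mxE role_rep mxE. Qed.

Lemma cyl_to_ne_in z : cyl z -> NE (cyl_to_ne z).
Proof.
move=> Sz; have in01 t : 0 < coords (cyl_to_ne z) t < 1.
  rewrite /coords mxE; case: (role t) => [i|l]; last exact: line_to_unit_in01.
  exact: zero_set_in01 Sz i.
have indiff := (indifferentE (cyl_to_ne z)).2; rewrite rep_point_cyl_to_ne in indiff.
move=> t; split=> //; apply: indiff; split=> // t' i ti.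
by rewrite /coords !mxE ti role_rep.
Qed.

Lemma ne_to_cylK p : NE p -> cyl_to_ne (ne_to_cyl p) = p.
Proof.
move=> NEp; have [copies _] := (indifferentE p).1 (fun t => (NEp t).2).
apply/rowP => t; rewrite /cyl_to_ne /ne_to_cyl mxE row_mxKl row_mxKr.
case e: (role t) => [i|l]; rewrite !mxE; first by rewrite -(copies t i e).
by rewrite (role_freeP e) unit_to_lineK //; case: (NEp (free l)).
Qed.

Lemma cyl_to_neK z : cyl z -> ne_to_cyl (cyl_to_ne z) = z.
Proof.
move=> _; rewrite -[RHS]hsubmxK /ne_to_cyl rep_point_cyl_to_ne; congr row_mx.
by apply/rowP => l; rewrite /coords !mxE role_free line_to_unitK mxE.
Qed.

Lemma ne_to_cyl_continuous : {within NE, continuous ne_to_cyl}.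
Proof.
apply: continuous_in_subspaceT => p; rewrite inE => NEp.
apply: continuous_coordwise => j; case: (split_ordP j) => l ->.
  have -> : (fun y => ne_to_cyl y ord0 (lshift k l)) = (fun y => y ord0 (rep l)).
    by apply/funext => y; rewrite /ne_to_cyl row_mxEl mxE.
  exact: coord_continuous.
have -> : (fun y => ne_to_cyl y ord0 (rshift n l)) =
          @unit_to_line R \o (fun y : 'rV[R]_N => y ord0 (free l)).
  by apply/funext => y; rewrite /ne_to_cyl row_mxEr mxE.
apply: continuous_comp; first exact: coord_continuous.
by apply: unit_to_line_continuous; case: (NEp (free l)).
Qed.

Lemma cyl_to_ne_continuous : {within cyl, continuous cyl_to_ne}.
Proof.
apply: continuous_subspaceT => z; apply: continuous_coordwise => t.
have -> : (fun y => cyl_to_ne y ord0 t) = (fun y => match role t with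
    | inl i => y ord0 (lshift k i)
    | inr l => line_to_unit (y ord0 (rshift n l)) end).
  by apply/funext => y; rewrite /cyl_to_ne mxE; case: (role t) => [i|l]; rewrite mxE.
case: (role t) => [i|l]; first exact: coord_continuous.
apply: (continuous_comp (f := fun y : 'rV[R]_(n + k) => y ord0 (rshift n l))).
  exact: coord_continuous.
exact: continuous_line_to_unit.
Qed.

(* Coordinate j of the graph of ne_to_cyl, with the denominator of
   unit_to_line cleared. *)
Definition graph_eqn (p : 'rV[R]_N) (z : R) (j : 'I_(n + k)) : R :=
  match fintype.split j with
  | inl i => z - coords p (rep i)
  | inr l => z * (coords p (free l) * (1 - coords p (free l))) - (2 * coords p (free l) - 1)
  end.

Lemma graph_eqnP p z j : (forall t, 0 < coords p t < 1) ->
  ne_to_cyl p ord0 j = z <-> graph_eqn p z j = 0.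
Proof.
move=> in01; rewrite /graph_eqn /ne_to_cyl; case: (split_ordP j) => l ->.
  by rewrite row_mxEl mxE; split=> [<-|/eqP]; rewrite ?subrr // subr_eq0 => /eqP.
rewrite row_mxEr mxE unit_to_lineE //=.
by split=> [->|/eqP]; rewrite ?subrr // subr_eq0 => /eqP.
Qed.

Lemma graph_sa : semialgebraic (graph_on NE ne_to_cyl).
Proof.
have poly_l t : poly_fun (fun w : 'rV[R]_(N + (n + k)) => lsubmx w ord0 t).
  by apply: eq_poly_fun (poly_fun_coord _ (lshift _ t)) => w; rewrite mxE.
have poly_r j : poly_fun (fun w : 'rV[R]_(N + (n + k)) => rsubmx w ord0 j).
  by apply: eq_poly_fun (poly_fun_coord _ (rshift _ j)) => w; rewrite mxE.
have poly_eqn j : poly_fun (fun w => graph_eqn (lsubmx w) (rsubmx w ord0 j) j).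
  rewrite /graph_eqn; case: (fintype.split j) => [i|l] /=.
    exact: poly_funB (poly_r j) (poly_l (rep i)).
  have px := poly_l (free l).
  exact: poly_funB (poly_funM (poly_r j) (poly_funM px (poly_funB (poly_funC _ 1) px)))
    (poly_funB (poly_funM (poly_funC _ 2) px) (poly_funC _ 1)).
apply: eq_sa (sa_setI (sa_preimage poly_l (totally_mixed_NE_sa u))
  (sa_forall (fun j => sa_eq0 (poly_eqn j)))) => w /=.
rewrite /graph_on /=; split=> -[NEw eqw]; split=> //; have in01 t := (NEw t).1.
  by apply/rowP => j; apply/graph_eqnP.
by move=> j; apply/graph_eqnP; rewrite // eqw.
Qed.

Lemma ne_cylinder_iso : sa_isomorphic NE cyl.
Proof.
exists ne_to_cyl, cyl_to_ne.
exact: conj ne_to_cyl_in (conj cyl_to_ne_in (conj ne_to_cylK (conj cyl_to_neK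
  (conj ne_to_cyl_continuous (conj cyl_to_ne_continuous graph_sa))))).
Qed.

Lemma ne_stably_isomorphic : stably_isomorphic NE (zero_set F).
Proof. exact: si_trans (si_iso ne_cylinder_iso) (si_proj k (zero_set_sa F)). Qed.

End Reduction.

(* Variable i is represented by the consecutive block of d i players
   starting at block_start i. *)
Section Blocks.
Local Open Scope nat_scope.

Lemma exists_step_crossing (f : nat -> nat) q k : f 0 <= q < f k ->
  exists2 i, i < k & f i <= q < f i.+1.
Proof.
elim: k => [|k ih] /andP [f0q qfk]; first by lia.
have [qfk'|fkq] := ltnP q (f k); last by exists k => //; apply/andP.
by have [i ik fi] := ih (introT andP (conj f0q qfk')); exists i => //; lia.
Qed.

Variables (n : nat) (d : 'I_n -> nat).

Definition block_start (q : nat) : nat := \sum_(j < n | j < q) d j.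
Definition block_total : nat := \sum_(j < n) d j.
Definition in_block (i : 'I_n) (q : nat) : bool :=
  block_start i <= q < block_start i + d i.

Lemma block_startS (i : 'I_n) : block_start i.+1 = block_start i + d i.
Proof.
rewrite /block_start (bigD1 i) //= ?ltnSn // addnC; congr addn.
by apply: eq_bigl => j; rewrite ltnS leq_eqVlt -val_eqE /=; case: ltngtP.
Qed.

Lemma leq_block_start q q' : q <= q' -> block_start q <= block_start q'.
Proof.
move=> qq'; rewrite [leqRHS](bigID (fun j : 'I_n => j < q)) /= -[leqLHS]addn0 leq_add //.
apply: eq_leq; apply: eq_bigl => j; case: (ltnP j q) => jq /=; last by rewrite andbF.
by rewrite andbT (leq_trans jq qq').
Qed.

Lemma block_start_total : block_start n = block_total.
Proof. by apply: eq_bigl => j; rewrite ltn_ord. Qed.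

Lemma block_end_le_total (i : 'I_n) : block_start i + d i <= block_total.
Proof. by rewrite -block_startS -block_start_total leq_block_start. Qed.

Lemma block_end_le_start (i i' : 'I_n) : i < i' -> block_start i + d i <= block_start i'.
Proof. by rewrite -block_startS; apply: leq_block_start. Qed.

Lemma in_block_inj (i i' : 'I_n) q : in_block i q -> in_block i' q -> i = i'.
Proof.
move=> /andP [iq qi] /andP [i'q qi']; case: (ltngtP i i') => [ii'|i'i|/val_inj //].
  by have := block_end_le_start ii'; lia.
by have := block_end_le_start i'i; lia.
Qed.

Lemma exists_in_block q : q < block_total -> exists i, in_block i q.
Proof.
rewrite -block_start_total => qD.
have /exists_step_crossing [i ni /andP [iq qi]] : block_start 0 <= q < block_start n.
  by rewrite qD andbT /block_start big_pred0.
by exists (Ordinal ni); rewrite /in_block -block_startS iq qi.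
Qed.

Lemma block_total_gt0_n (q : 'I_block_total) : 0 < n.
Proof.
case: (posnP n) => // n0; have := ltn_ord q.
have : block_total = 0 by rewrite /block_total big_pred0 // => j; have := ltn_ord j; lia.
by lia.
Qed.

Definition block_of (q : 'I_block_total) : 'I_n :=
  odflt (Ordinal (block_total_gt0_n q)) [pick i | in_block i q].

Lemma block_ofP q : in_block (block_of q) q.
Proof.
rewrite /block_of; case: pickP => [i //|none].
by have [i iq] := exists_in_block (ltn_ord q); have := none i; rewrite iq.
Qed.

Lemma block_ofE (q : 'I_block_total) i : in_block i q -> block_of q = i.
Proof. exact: in_block_inj (block_ofP q). Qed.

End Blocks.

Section MonomialOnBlocks.
Variable R : comNzRingType.

Lemma prod_interval_const N a e (c : R) : (a + e <= N)%N ->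
  \prod_(t < N | (a <= t < a + e)%N) c = c ^+ e.
Proof.
move=> aeN; rewrite -{2}(addKn a e) -prodr_const_nat big_geq_mkord -big_mkord.
by rewrite (big_nat_widen _ _ _ _ _ aeN) big_mkord.
Qed.

Variables (n : nat) (d : 'I_n -> nat).

(* Players representing the monomial prod_i x_i^(e i): the first e i players
   of each block. *)
Definition block_prefix N (e : 'I_n -> nat) : {set 'I_N} :=
  [set t : 'I_N | [exists i : 'I_n, block_start d i <= t < block_start d i + e i]%N].

Lemma prod_block_prefix N (e : 'I_n -> nat) (x : 'I_n -> R) (f : 'I_N -> R) :
  (forall i, e i <= d i)%N -> (block_total d <= N)%N ->
  (forall (t : 'I_N) i, in_block d i t -> f t = x i) ->
  \prod_(t in block_prefix N e) f t = \prod_i x i ^+ e i.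
Proof.
move=> ed dN fx; pose P (i : 'I_n) (t : 'I_N) := (block_start d i <= t < block_start d i + e i)%N.
have Pd i t : P i t -> in_block d i t.
  by move=> /andP [it ti]; rewrite /in_block it (leq_trans ti) ?leq_add2l.
transitivity (\prod_(t < N) \prod_i (if P i t then x i else 1)).
  rewrite big_mkcond; apply: eq_bigr => t _; rewrite inE.
  case: existsP => [[i it]|none]; last first.
    by rewrite big1 // => i _; case: ifP => // it; case: none; exists i.
  rewrite (bigD1 i) //= {1}/P it (fx _ _ (Pd _ _ it)) big1 ?mulr1 // => i' i'i.
  case: ifP => // i't; have := in_block_inj (Pd _ _ i't) (Pd _ _ it).
  by move/eqP: i'i.
rewrite exchange_big; apply: eq_bigr => i _; rewrite -big_mkcond /=.
apply: prod_interval_const; apply: leq_trans dN.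
by apply: leq_trans (block_end_le_total d i); rewrite leq_add2l.
Qed.

End MonomialOnBlocks.

Lemma val_insubd_ord k (t : 'I_k) s : (s < k)%N -> val (insubd t s) = s.
Proof. by move=> sk; rewrite val_insubd sk. Qed.

Lemma insubd_ordE k (t t' : 'I_k) s : (s < k)%N -> insubd t s = insubd t' s.
Proof. by move=> sk; apply: val_inj; rewrite !val_insubd_ord. Qed.

(* Players 0 .. D-1 are block players, block i holding deg i copies of x_i;
   players D .. D+m-1 are equation players, player D+j being paid F_j with
   each x_i^e replaced by the product of the first e copies of x_i. *)
Section GameConstruction.
Variables (R : realType) (n m : nat) (F : 'I_m -> {mpoly R[n]}).

Definition deg (i : 'I_n) : nat := (\max_(j < m) deg_in (F j) i)%N.

Local Notation D := (block_total deg).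
Local Notation N := (D + m)%N.

Lemma deg_msupp j (mm : 'X_{1..n}) i : mm \in msupp (F j) -> (mm i <= deg i)%N.
Proof.
move=> mmF; apply: leq_trans (leq_bigmax (F := fun j' => deg_in (F j') i) j).
exact: (leq_bigmax_seq (F := fun mm' : 'X_{1..n} => mm' i) mm mmF).
Qed.

Definition eqn_terms (j : 'I_m) : seq (R * {set 'I_N}) :=
  [seq ((F j)@_mm, block_prefix deg N (fun i => mm i)) | mm <- msupp (F j)].

Definition game_terms (B : 'I_D -> seq (R * {set 'I_N})) (t : 'I_N) :=
  match fintype.split t with inl q => B q | inr j => eqn_terms j end.

Definition block_self_free (B : 'I_D -> seq (R * {set 'I_N})) :=
  forall q l, l \in B q -> lshift m q \notin l.2.

Lemma game_terms_self_free B :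
  block_self_free B -> forall t l, l \in game_terms B t -> t \notin l.2.
Proof.
rewrite /game_terms => Bfree t l; case: (split_ordP t) => [q ->|j ->]; first exact: Bfree.
move=> /mapP [mm mmF ->] /=; rewrite inE; apply/existsP => -[i /andP [_ /=]].
by have := deg_msupp i mmF; have := block_end_le_total deg i; lia.
Qed.

Lemma payoff_block B q p :
  payoff_poly (game_terms B) (lshift m q) p = \sum_(l <- B q) l.1 * monomial l.2 p.
Proof.
rewrite /payoff_poly /game_terms; case: (split_ordP (lshift m q)) => [q' e|j e].
  by rewrite (lshift_inj e).
by move/(congr1 val): e => /=; have := ltn_ord q; lia.
Qed.

Lemma payoff_eqn B j p : payoff_poly (game_terms B) (rshift D j) p =
  \sum_(mm <- msupp (F j)) (F j)@_mm * monomial (block_prefix deg N (fun i => mm i)) p.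
Proof.
rewrite /payoff_poly /game_terms; case: (split_ordP (rshift D j)) => [q e|j' e].
  by move/(congr1 val): e => /=; have := ltn_ord q; lia.
by rewrite -(rshift_inj e) big_map.
Qed.

Lemma indifferent_game_terms B p : block_self_free B ->
  (forall t, dev_payoff (poly_game (game_terms B)) t true p =
             dev_payoff (poly_game (game_terms B)) t false p) <->
  (forall q, \sum_(l <- B q) l.1 * monomial l.2 p = 0) /\
  (forall j, payoff_poly (game_terms B) (rshift D j) p = 0).
Proof.
move=> Bfree; have indiff t := poly_game_indifferent p (@game_terms_self_free B Bfree t).
split=> [eq0|[blocks0 eqns0] t]; last first.
  by apply/indiff; case: (split_ordP t) => [q|j] ->; rewrite ?payoff_block.
by split=> [q|j]; [rewrite -payoff_block|]; apply/indiff/eq0.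
Qed.

Definition eq_terms (a b : 'I_N) : seq (R * {set 'I_N}) :=
  [:: (1, [set a]%SET); (-1, [set b]%SET)].

Lemma monomial1 (a : 'I_N) (p : 'rV[R]_N) : monomial [set a]%SET p = coords p a.
Proof. by rewrite /monomial (big_pred1 a) // => t; rewrite finset.in_set1. Qed.

Lemma payoff_eq_terms a b p :
  \sum_(l <- eq_terms a b) l.1 * monomial l.2 p = coords p a - coords p b.
Proof. by rewrite !big_cons big_nil !monomial1 addr0 mul1r mulN1r. Qed.

Hypothesis deg_gt0 : forall i, (0 < deg i)%N.

Lemma block_start_lt (i : 'I_n) : (block_start deg i < D)%N.
Proof. by have := block_end_le_total deg i; have := deg_gt0 i; lia. Qed.

Definition rep (i : 'I_n) : 'I_N := lshift m (Ordinal (block_start_lt i)).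

Definition blocks_agree (p : 'rV[R]_N) :=
  forall (t : 'I_N) i, in_block deg i t -> coords p t = coords p (rep i).

Lemma payoff_eqn_agree B j p : blocks_agree p ->
  payoff_poly (game_terms B) (rshift D j) p = peval (F j) (rep_point rep p).
Proof.
move=> agree; rewrite payoff_eqn /peval mevalE big_seq [RHS]big_seq.
apply: eq_bigr => mm mmF; congr (_ * _).
rewrite /monomial (prod_block_prefix (x := fun i => coords p (rep i))) ?leq_addr //.
- by apply: eq_bigr => i _; rewrite /coords mxE.
- by move=> i; exact: deg_msupp mmF.
Qed.

End GameConstruction.

(* Generic case: player q = s + 2 mod D forces copy s to agree with copy s + 1
   whenever both lie in the same block.  This needs D >= 3, or no block of
   size >= 2. *)
Definition link (D q : nat) : nat := ((q + D - 2) %% D)%N.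

Lemma link_spec D s : (3 <= D)%N -> (s.+1 < D)%N ->
  let q := ((s + 2) %% D)%N in [/\ (q < D)%N, link D q = s, q != s & q != s.+1].
Proof.
rewrite /link => D3 sD /=; have [s2D|Ds2] := ltnP (s + 2) D.
  rewrite modn_small // (_ : s + 2 + D - 2 = s + D)%N; last by lia.
  by rewrite modnDr modn_small; [split=> //; lia | lia].
have -> : (s + 2 = D)%N by lia.
rewrite modnn add0n modn_small; [split=> //; lia | lia].
Qed.

Section ChainGame.
Variables (R : realType) (n m : nat) (F : 'I_m -> {mpoly R[n]}).
Local Notation deg := (deg F).
Local Notation D := (block_total deg).
Local Notation N := (D + m)%N.
Hypothesis deg_gt0 : forall i, (0 < deg i)%N.
Hypothesis chain_room : (3 <= D)%N \/ (forall i, deg i <= 1)%N.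
Local Notation rep := (rep deg_gt0).

Definition watches (q : nat) : bool :=
  [&& (link D q).+1 < D,
      [exists i, in_block deg i (link D q) && in_block deg i (link D q).+1],
      q != link D q & q != (link D q).+1]%N.

Definition chain_terms (q : 'I_D) : seq (R * {set 'I_N}) :=
  if watches q then eq_terms (insubd (lshift m q) (link D q))
                             (insubd (lshift m q) (link D q).+1)
  else [::].

Lemma chain_terms_self_free : block_self_free chain_terms.
Proof.
move=> q l; rewrite /chain_terms; case: ifP => // /and4P [sD _ qs qs1].
by rewrite !inE => /orP [] /eqP -> /=; rewrite finset.in_set1 -val_eqE /=
  val_insubd_ord //; lia.
Qed.

Lemma payoff_chain q p : \sum_(l <- chain_terms q) l.1 * monomial l.2 p =
  if watches q then coords p (insubd (lshift m q) (link D q)) -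
                    coords p (insubd (lshift m q) (link D q).+1)
  else 0.
Proof. by rewrite /chain_terms; case: ifP => _; rewrite ?payoff_eq_terms ?big_nil. Qed.

Lemma chain_blocks_agree p :
  (forall q, \sum_(l <- chain_terms q) l.1 * monomial l.2 p = 0) -> blocks_agree deg_gt0 p.
Proof.
move=> chain0 t i /andP [it ti]; pose at_ s : 'I_N := insubd (rep i) s.
have startN : (block_start deg i < N)%N by rewrite ltn_addr ?block_start_lt.
have at_agree k : (k < deg i)%N ->
    coords p (at_ (block_start deg i + k)%N) = coords p (rep i).
  elim: k => [_|k ih ki]; first by congr (coords p _); apply/val_inj;
    rewrite val_insubd_ord addn0.
  have D3 : (3 <= D)%N by case: chain_room => // small; have := small i; lia.
  set s := (block_start deg i + k)%N.
  have sD : (s.+1 < D)%N by have := block_end_le_total deg i; lia.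
  have [qD links qs qs1] := link_spec D3 sD; set q := Ordinal qD.
  have wq : watches q.
    rewrite /watches /= links sD qs qs1 !andbT; apply/existsP; exists i.
    by rewrite /in_block /s; lia.
  have x_s : coords p (at_ s) = coords p (at_ s.+1).
    move: (chain0 q); rewrite payoff_chain wq links => /eqP; rewrite subr_eq0 => /eqP.
    by rewrite /at_ !(insubd_ordE (lshift m q) (rep i)) //; lia.
  by rewrite addnS -/s -x_s ih //; lia.
rewrite -(at_agree (t - block_start deg i)%N) ?ltn_subLR //.
by congr (coords p _); apply/val_inj; rewrite /at_ subnKC // val_insubd_ord.
Qed.

Lemma blocks_agree_chain p : blocks_agree deg_gt0 p ->
  forall q, \sum_(l <- chain_terms q) l.1 * monomial l.2 p = 0.
Proof.
move=> agree q; rewrite payoff_chain.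
case: ifP => // /and4P [sD /existsP [i /andP [si s1i]] _ _].
by rewrite (agree _ i) ?(agree _ i) ?subrr // val_insubd_ord //; lia.
Qed.

Definition chain_role (t : 'I_N) : 'I_n + 'I_m :=
  match fintype.split t with inl q => inl (block_of q) | inr j => inr j end.

Lemma chain_role_rep i : chain_role (rep i) = inl i.
Proof.
rewrite /chain_role; case: split_ordP => [q /lshift_inj <-|j /(congr1 val) /=].
  by congr inl; apply: block_ofE; rewrite /in_block /=; have := deg_gt0 i; lia.
by have := block_start_lt deg_gt0 i; lia.
Qed.

Lemma chain_role_free j : chain_role (rshift D j) = inr j.
Proof.
rewrite /chain_role; case: split_ordP => [q /(congr1 val) /=|j' /rshift_inj <- //].
by have := ltn_ord q; lia.
Qed.

Lemma chain_role_freeP t j : chain_role t = inr j -> t = rshift D j.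
Proof. by rewrite /chain_role; case: split_ordP => [q _ //|j' -> []<-]. Qed.

Lemma chain_role_agree p :
  (forall t i, chain_role t = inl i -> coords p t = coords p (rep i)) <->
  blocks_agree deg_gt0 p.
Proof.
split=> agree t i; last first.
  rewrite /chain_role; case: split_ordP => [q -> [<-]|//].
  exact/agree/block_ofP.
move=> it; apply: agree; rewrite /chain_role; case: split_ordP => [q tq|j tj].
  by congr inl; apply: block_ofE; move: it; rewrite tq.
by move: it; rewrite tj /in_block /= => /andP [_]; have := block_end_le_total deg i; lia.
Qed.

Lemma chain_game_indifferentE p :
  (forall t, dev_payoff (poly_game (game_terms chain_terms)) t true p =
             dev_payoff (poly_game (game_terms chain_terms)) t false p) <->
  (forall t i, chain_role t = inl i -> coords p t = coords p (rep i)) /\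
  zero_set F (rep_point rep p).
Proof.
have indiffE := indifferent_game_terms p chain_terms_self_free.
split=> [/indiffE [/chain_blocks_agree agree eqn0]|[/chain_role_agree agree S_p]].
  split=> [|j]; first exact/chain_role_agree.
  by rewrite -(payoff_eqn_agree chain_terms j agree).
apply/indiffE; split; first exact: blocks_agree_chain.
by move=> j; rewrite (payoff_eqn_agree _ _ agree); apply: S_p.
Qed.

Lemma chain_game_stably_isomorphic :
  (forall x, zero_set F x -> forall i, 0 < coords x i < 1) ->
  stably_isomorphic (totally_mixed_NE (poly_game (game_terms chain_terms))) (zero_set F).
Proof.
move=> in01; exact: ne_stably_isomorphic chain_role_rep chain_role_free
  chain_role_freeP in01 chain_game_indifferentE.
Qed.

End ChainGame.

(* Exceptional case D = 2 with a single block of size 2: the two block players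
   cannot watch each other, so both copies are compared with the first
   equation player, who thereby becomes a third copy of the variable. *)
Section PairGame.
Variables (R : realType) (n m' : nat) (F : 'I_m'.+1 -> {mpoly R[n]}).
Local Notation m := m'.+1.
Local Notation deg := (deg F).
Local Notation D := (block_total deg).
Local Notation N := (D + m)%N.
Hypothesis deg_gt0 : forall i, (0 < deg i)%N.
Hypothesis D2 : D = 2%N.
Variable i0 : 'I_n.
Hypothesis deg_i0 : (2 <= deg i0)%N.
Local Notation rep := (rep deg_gt0).

Lemma single_block i : i = i0.
Proof.
apply/eqP/negPn/negP => ii0; have := deg_gt0 i.
suff: (deg i0 + deg i <= D)%N by lia.
by rewrite /block_total (bigD1 i0) //= leq_add2l (bigD1 i) //= leq_addr.
Qed.

Lemma block_start0 (i : 'I_n) : block_start deg i = 0%N.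
Proof. by rewrite /block_start big1 // => j; rewrite (single_block j) (single_block i) ltnn. Qed.

Lemma deg_eq2 (i : 'I_n) : deg i = 2%N.
Proof. by have := block_end_le_total deg i; rewrite block_start0 D2 (single_block i); lia. Qed.

Definition pos (s : nat) : 'I_N := insubd (rep i0) s.

Lemma pos_val (t : 'I_N) : pos t = t.
Proof. by apply: val_inj; rewrite val_insubd_ord. Qed.

Lemma rep_pos i : rep i = pos 0.
Proof. by apply: val_inj; rewrite val_insubd_ord; [exact: block_start0 | rewrite D2]. Qed.

Definition pair_terms (q : 'I_D) : seq (R * {set 'I_N}) :=
  if q == 0%N :> nat then eq_terms (pos 1) (pos D) else eq_terms (pos 0) (pos D).

Lemma pair_terms_self_free : block_self_free pair_terms.
Proof.
move=> q l; have q2 : (q < 2)%N by rewrite -D2.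
by rewrite /pair_terms; case: ifP => /eqP q0; rewrite !inE => /orP [] /eqP -> /=;
  rewrite finset.in_set1 -val_eqE /= val_insubd_ord ?D2 //; lia.
Qed.

Lemma payoff_pair q p : \sum_(l <- pair_terms q) l.1 * monomial l.2 p =
  coords p (pos (q == 0%N :> nat)) - coords p (pos D).
Proof. by rewrite /pair_terms; case: eqP => _; rewrite payoff_eq_terms. Qed.

Definition pair_role (t : 'I_N) : 'I_n + 'I_m' :=
  match fintype.split t with
  | inl _ => inl i0
  | inr j => if unlift ord0 j is Some j' then inr j' else inl i0
  end.

Definition pair_free (j : 'I_m') : 'I_N := rshift D (lift ord0 j).

Lemma pair_role_rep i : pair_role (rep i) = inl i.
Proof.
rewrite /pair_role (single_block i); case: split_ordP => [//|j /(congr1 val)].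
by rewrite /= block_start0; lia.
Qed.

Lemma pair_role_free j : pair_role (pair_free j) = inr j.
Proof.
rewrite /pair_role /pair_free; case: split_ordP => [q /(congr1 val) /=|j' /rshift_inj <-].
  by have := ltn_ord q; lia.
by rewrite liftK.
Qed.

Lemma pair_role_freeP t j : pair_role t = inr j -> t = pair_free j.
Proof.
rewrite /pair_role /pair_free; case: split_ordP => [//|j' ->].
by case: unliftP => [j'' -> []<-|].
Qed.

Lemma pair_role_copy t i : pair_role t = inl i -> [\/ t = pos 0, t = pos 1 | t = pos D].
Proof.
rewrite /pair_role; case: split_ordP => [q tq _|j tj].
  have q2 : (q < 2)%N by rewrite -D2.
  by case: q q2 tq => -[|[|//]] ? _ tq; rewrite -(pos_val t) tq; [apply: Or31|apply: Or32].
case: unliftP => [//|j0 _]; rewrite -(pos_val t) tj j0; apply: Or33.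
by rewrite /= addn0.
Qed.

Lemma pair_role_pos s : (s <= D)%N -> pair_role (pos s) = inl i0.
Proof.
move=> sD; rewrite /pair_role; case: split_ordP => [//|j /(congr1 val)].
rewrite val_insubd_ord /=; last by rewrite D2 in sD *; lia.
by case: unliftP => [j' -> /=|//]; rewrite /bump /=; lia.
Qed.

Lemma pair_game_indifferentE p :
  (forall t, dev_payoff (poly_game (game_terms pair_terms)) t true p =
             dev_payoff (poly_game (game_terms pair_terms)) t false p) <->
  (forall t i, pair_role t = inl i -> coords p t = coords p (rep i)) /\
  zero_set F (rep_point rep p).
Proof.
have D0 : (0 < D)%N by rewrite D2.
have D1 : (1 < D)%N by rewrite D2.
have agree_of : coords p (pos 1) = coords p (pos 0) -> blocks_agree deg_gt0 p.
  move=> x10 t i; rewrite /in_block block_start0 deg_eq2 rep_pos => /andP [_ t2].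
  by rewrite -(pos_val t); case: (nat_of_ord t) t2 => [|[|//]].
have indiffE := indifferent_game_terms p pair_terms_self_free.
split=> [/indiffE [blocks0 eqn0]|[copies S_p]].
  have := blocks0 (Ordinal D0); rewrite payoff_pair /= => /eqP; rewrite subr_eq0 => /eqP x1D.
  have := blocks0 (Ordinal D1); rewrite payoff_pair /= => /eqP; rewrite subr_eq0 => /eqP x0D.
  have agree := agree_of (etrans x1D (esym x0D)).
  split=> [t i /pair_role_copy [] ->|j]; rewrite ?rep_pos ?x1D ?x0D //.
  by rewrite -(payoff_eqn_agree pair_terms j agree).
have xD := copies _ i0 (pair_role_pos (leqnn D)); rewrite rep_pos in xD.
have x1 := copies _ i0 (pair_role_pos (ltnW D1)); rewrite rep_pos in x1.
apply/indiffE; split=> [q|j]; first by rewrite payoff_pair xD; case: eqP => _ /=; rewrite ?x1 subrr.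
by rewrite (payoff_eqn_agree _ _ (agree_of x1)); apply: S_p.
Qed.

Lemma pair_game_stably_isomorphic :
  (forall x, zero_set F x -> forall i, 0 < coords x i < 1) ->
  stably_isomorphic (totally_mixed_NE (poly_game (game_terms pair_terms))) (zero_set F).
Proof.
move=> in01; exact: ne_stably_isomorphic pair_role_rep pair_role_free
  pair_role_freeP in01 pair_game_indifferentE.
Qed.

End PairGame.

Section MainTheorem.
Variables (R : realType) (n : nat).

Lemma sa_isomorphic_set0 a b : sa_isomorphic (@set0 'rV[R]_a) (@set0 'rV[R]_b).
Proof.
exists (fun=> 0), (fun=> 0); do 4 (split; first by []).
split; first exact: continuous_subspace0.
split; first exact: continuous_subspace0.
by apply: eq_sa (sa_set0 R _) => z; split => // -[].
Qed.

(* With S empty, one equation player paid the constant 1 for s_i1 is never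
   indifferent. *)
Lemma empty_zero_set_game m (F : 'I_m -> {mpoly R[n]}) : zero_set F = set0 ->
  exists u : game2 R (block_total (deg F) + m),
    stably_isomorphic (totally_mixed_NE u) (zero_set F).
Proof.
move=> S0; have m0 : (0 < m)%N.
  case: (posnP m) => // m0; have : zero_set F 0 by move=> j; have := ltn_ord j; lia.
  by rewrite S0.
pose N := (block_total (deg F) + m)%N.
pose L (_ : 'I_N) : seq (R * {set 'I_N}) := [:: (1, finset.set0)].
exists (poly_game L); suff -> : totally_mixed_NE (poly_game L) = set0.
  by rewrite S0; apply/si_iso/sa_isomorphic_set0.
apply/seteqP; split=> // p /(_ (rshift _ (Ordinal m0))) [_].
rewrite (@poly_game_indifferent _ _ L) /payoff_poly => [|l]; last first.
  by rewrite inE => /eqP -> /=; rewrite finset.in_set0.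
rewrite big_seq1 /monomial big_pred0 => [|k]; last by rewrite finset.in_set0.
by rewrite mulr1 => /eqP; rewrite oner_eq0.
Qed.

(* If x_i occurred in no F_j, setting x_i := 1 would stay in S, which lies
   in (0,1)^n. *)
Lemma deg_gt0_of_point m (F : 'I_m -> {mpoly R[n]}) (x : 'rV[R]_n) :
  (forall y, zero_set F y -> forall i, 0 < coords y i < 1) -> zero_set F x ->
  forall i, (0 < deg F i)%N.
Proof.
move=> in01 Sx i; rewrite lt0n; apply/negP => /eqP deg0.
pose y : 'rV[R]_n := \row_k (if k == i then 1 else x ord0 k).
suff /in01 /(_ i) : zero_set F y by rewrite /coords mxE eqxx ltxx andbF.
move=> j; rewrite -(Sx j) /peval !mevalE; apply: eq_big_seq => mm mmF; congr (_ * _).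
apply: eq_bigr => k _; rewrite /coords mxE; case: eqP => [->|//].
by have := deg_msupp i mmF; rewrite deg0 leqn0 => /eqP ->; rewrite !expr0.
Qed.

Lemma pair_case m (F : 'I_m -> {mpoly R[n]}) (x : 'rV[R]_n) (i0 : 'I_n) :
  (forall y, zero_set F y -> forall i, 0 < coords y i < 1) -> zero_set F x ->
  (2 <= deg F i0)%N -> block_total (deg F) = 2%N ->
  exists u : game2 R (block_total (deg F) + m),
    stably_isomorphic (totally_mixed_NE u) (zero_set F).
Proof.
case: m F => [|m'] F in01 Sx deg_i0 D2; have deg_gt0 := deg_gt0_of_point in01 Sx.
  (* Without equations S is all of R^n, hence contains 0. *)
  have : zero_set F 0 by case.
  by move=> /in01 /(_ i0); rewrite /coords mxE ltxx.
exists (poly_game (game_terms (pair_terms deg_gt0 i0))).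
by have := pair_game_stably_isomorphic deg_gt0 D2 deg_i0 in01.
Qed.

End MainTheorem.

Unset Implicit Arguments.
Set Strict Implicit.

Theorem theorem6 (R : realType) (n m : nat) (F : 'I_m -> mpoly.mpoly n R) :
  (forall x : 'rV[R]_n, zero_set F x ->
     (forall i : 'I_n, 0 < coords x i) /\ \sum_(i < n) coords x i < 1) ->
  let D' := (\sum_(i < n) \max_(j < m) deg_in (F j) i)%N in
  exists u : game2 R (D' + m),
    stably_isomorphic (totally_mixed_NE u) (zero_set F).
Proof.
move=> simplex D'; change D' with (block_total (deg F)).
have in01 x : zero_set F x -> forall i, 0 < coords x i < 1.
  move=> /simplex [x_gt0 sum_lt1] i; rewrite x_gt0 /=; apply: le_lt_trans sum_lt1.
  by rewrite (bigD1 i) //= lerDl sumr_ge0 // => k _; rewrite ltW.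
have [S0|/set0P [x Sx]] := eqVneq (zero_set F) set0.
  exact: empty_zero_set_game.
have deg_gt0 := deg_gt0_of_point in01 Sx.
have [chain_room|] := pselect ((3 <= block_total (deg F))%N \/ forall i, (deg F i <= 1)%N).
  exists (poly_game (game_terms (@chain_terms R n m F))).
  exact: chain_game_stably_isomorphic deg_gt0 chain_room in01.
move=> /not_orP [/negP D_lt3 /existsNP [i0 /negP deg_i0]].
have D_ge := block_end_le_total (deg F) i0; rewrite -ltnNge in deg_i0 D_lt3.
have D2 : block_total (deg F) = 2%N by lia.
exact: pair_case in01 Sx deg_i0 D2.
Qed.
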